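(* Fix $\epsilon\in(0,\pi)$ and choose $\delta\in(0,1)$ such that $\frac{-2\delta^2-2\delta+4}{\delta^2+10\delta+4}\ge\cos\epsilon$. Then for any $x=(x_1,\dots,x_6)\in\mathbb{R}^6_{>1}$ with $\max_{2\le i\le6}x_i\le2$ and $x_1=1+\delta$, $$\phi(x)\ge\frac{-2\delta^2-2\delta+4}{\delta^2+10\delta+4}\ge\cos\epsilon,$$ so in particular the angle $\alpha=\arccos(\max\{-1,\min\{\phi(x),1\}\})$ satisfies $\cos\alpha\ge\cos\epsilon$.
   Context: For $x=(x_1,\dots,x_6)\in\mathbb{R}^6_{\ge1}$ define $$\phi(x)=\frac{x_2x_3+x_5x_6+x_1x_2x_5+x_1x_3x_6-x_1^2x_4+x_4}{\sqrt{2x_1x_2x_6+x_1^2+x_2^2+x_6^2-1}\sqrt{2x_1x_3x_5+x_1^2+x_3^2+x_5^2-1}}.$$ (This is the cosine of the extended dihedral angle at edge $e_1$ of a generalized hyper-ideal tetrahedron whose edges have cosh-lengths $x_1,\dots,x_6$, with $e_{i+3}$ opposite $e_i$.) *)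

From Stdlib Require Import Reals.
Open Scope R_scope.

(* phi(x) : cosine of the extended dihedral angle at edge e1. *)
Definition phi (x1 x2 x3 x4 x5 x6 : R) : R :=
  (x2*x3 + x5*x6 + x1*x2*x5 + x1*x3*x6 - x1^2*x4 + x4) /
  (sqrt (2*x1*x2*x6 + x1^2 + x2^2 + x6^2 - 1) *
   sqrt (2*x1*x3*x5 + x1^2 + x3^2 + x5^2 - 1)).

Definition bnd (d : R) : R := (-2*d^2 - 2*d + 4) / (d^2 + 10*d + 4).

Definition alpha_of (t : R) : R := acos (Rmax (-1) (Rmin t 1)).

(** Write [P = x2 + x1 x6] and [Q = x3 + x1 x5].  Each radicand in the
    denominator of [phi] is [P^2] (resp. [Q^2]) minus the nonnegative
    product [(x1^2 - 1)(x6^2 - 1)] (resp. with [x5]), so the denominator is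
    at most [P Q], while the numerator is [P Q - (x1^2 - 1)(x5 x6 + x4)].
    For edge lengths in [[1, 2]] the correction term is at most
    [3 (x1 - 1)/(x1 + 1) P Q], which gives [phi >= 2 (2 - x1)/(1 + x1)];
    for [x1 = 1 + delta] this dominates [bnd delta]. *)

From Stdlib Require Import Reals Lra Psatz.
Open Scope R_scope.

Lemma sqrt_face_radicand_bounds (y a b : R) :
  1 <= y -> 1 <= a -> 1 <= b ->
  0 < sqrt (2*y*a*b + y^2 + a^2 + b^2 - 1) <= a + y*b.
Proof.
  intros Hy Ha Hb.
  assert (Hprod : 0 <= (y^2 - 1) * (b^2 - 1)) by (apply Rmult_le_pos; nra).
  assert (Hab : 1 <= y*a*b) by (assert (1 <= y*a) by nra; nra).
  split.
  - apply sqrt_lt_R0; nra.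
  - rewrite <- (sqrt_pow2 (a + y*b)) by nra.
    apply sqrt_le_1_alt; nra.
Qed.

Lemma phi_numerator_eq (x1 x2 x3 x4 x5 x6 : R) :
  x2*x3 + x5*x6 + x1*x2*x5 + x1*x3*x6 - x1^2*x4 + x4 =
  (x2 + x1*x6) * (x3 + x1*x5) - (x1^2 - 1) * (x5*x6 + x4).
Proof. ring. Qed.

Lemma edge_product_bound (y a b : R) :
  1 <= y -> 1 <= a <= 2 -> 1 <= b <= 2 ->
  (1 + y)^2 * (a*b + 2) <= 3 * ((1 + y*a) * (1 + y*b)).
Proof.
  intros Hy Ha Hb.
  (* in [s = a - 1], [t = b - 1] the difference is [>= 2(s + t) - s t],
     which is nonnegative because [s t <= s] *)
  assert (E : 3 * ((1 + y*a) * (1 + y*b)) - (1 + y)^2 * (a*b + 2) =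
              (2*y^2 + y - 1) * ((a - 1) + (b - 1))
              + (2*y^2 - 2*y - 1) * ((a - 1) * (b - 1))) by ring.
  assert (Hst : 0 <= (a - 1) * (b - 1) <= a - 1) by (split; nra).
  assert (Hlin : 2 * ((a - 1) + (b - 1)) <= (2*y^2 + y - 1) * ((a - 1) + (b - 1)))
    by (apply Rmult_le_compat_r; nra).
  assert (Hquad : - ((a - 1) * (b - 1)) <= (2*y^2 - 2*y - 1) * ((a - 1) * (b - 1)))
    by (assert (0 <= 2 * y * (y - 1) * ((a - 1) * (b - 1)))
          by (apply Rmult_le_pos; nra); nra).
  lra.
Qed.

Lemma phi_numerator_lower_bound (x1 x2 x3 x4 x5 x6 : R) :
  1 <= x1 -> 1 <= x2 -> 1 <= x3 -> x4 <= 2 ->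
  1 <= x5 <= 2 -> 1 <= x6 <= 2 ->
  2 * (2 - x1) * ((x2 + x1*x6) * (x3 + x1*x5)) <=
  (1 + x1) * (x2*x3 + x5*x6 + x1*x2*x5 + x1*x3*x6 - x1^2*x4 + x4).
Proof.
  intros H1 H2 H3 H4 H5 H6.
  rewrite phi_numerator_eq.
  set (PQ := (x2 + x1*x6) * (x3 + x1*x5)).
  assert (HPQ : (1 + x1*x6) * (1 + x1*x5) <= PQ)
    by (apply Rmult_le_compat; nra).
  assert (Hedge := edge_product_bound x1 x6 x5 H1 H6 H5).
  assert (Hcorr : (1 + x1)^2 * (x5*x6 + x4) <= 3 * PQ) by nra.
  assert (E : (1 + x1) * (PQ - (x1^2 - 1) * (x5*x6 + x4)) - 2 * (2 - x1) * PQ =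
              (x1 - 1) * (3 * PQ - (1 + x1)^2 * (x5*x6 + x4))) by ring.
  assert (0 <= (x1 - 1) * (3 * PQ - (1 + x1)^2 * (x5*x6 + x4)))
    by (apply Rmult_le_pos; lra).
  lra.
Qed.

Lemma le_div_of_mul_le (c n d m : R) :
  0 <= c -> 0 < d <= m -> c * m <= n -> c <= n / d.
Proof.
  intros Hc Hd Hn.
  apply (Rmult_le_reg_r d); [lra|].
  unfold Rdiv. rewrite Rmult_assoc, Rinv_l, Rmult_1_r by lra.
  nra.
Qed.

Lemma phi_lower_bound (x1 x2 x3 x4 x5 x6 : R) :
  1 <= x1 <= 2 -> 1 <= x2 -> 1 <= x3 -> x4 <= 2 ->
  1 <= x5 <= 2 -> 1 <= x6 <= 2 ->
  2 * (2 - x1) / (1 + x1) <= phi x1 x2 x3 x4 x5 x6.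
Proof.
  intros H1 H2 H3 H4 H5 H6.
  destruct (sqrt_face_radicand_bounds x1 x2 x6) as [HA0 HA]; try lra.
  destruct (sqrt_face_radicand_bounds x1 x3 x5) as [HB0 HB]; try lra.
  assert (Hnum := phi_numerator_lower_bound x1 x2 x3 x4 x5 x6 ltac:(lra) H2 H3 H4 H5 H6).
  unfold phi.
  apply le_div_of_mul_le with ((x2 + x1*x6) * (x3 + x1*x5)).
  - apply Rmult_le_pos; [lra|]. apply Rlt_le, Rinv_0_lt_compat; lra.
  - split; [apply Rmult_lt_0_compat; lra | apply Rmult_le_compat; lra].
  - apply (Rmult_le_reg_l (1 + x1)); [lra|].
    unfold Rdiv. field_simplify; [|lra]. lra.
Qed.

Lemma bnd_le (d : R) : 0 <= d <= 1 -> bnd d <= 2 * (1 - d) / (2 + d).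
Proof.
  intros Hd. unfold bnd.
  (* [-2d^2 - 2d + 4 = 2(1 - d)(2 + d)] and [(2 + d)^2 <= d^2 + 10 d + 4] *)
  apply Rmult_le_reg_r with ((d^2 + 10*d + 4) * (2 + d)); [nra|].
  field_simplify; nra.
Qed.

Lemma cos_alpha_of_ge (c t : R) : c <= 1 -> c <= t -> c <= cos (alpha_of t).
Proof.
  intros Hc1 Hct. unfold alpha_of.
  rewrite cos_acos.
  - apply Rle_trans with (Rmin t 1); [apply Rmin_glb; lra | apply Rmax_r].
  - split; [apply Rmax_l | apply Rmax_lub; [lra | apply Rmin_r]].
Qed.

Theorem lemma3p3 (eps delta : R) :
  0 < eps < PI ->
  0 < delta < 1 ->
  bnd delta >= cos eps ->
  forall x1 x2 x3 x4 x5 x6 : R,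
    1 < x1 -> 1 < x2 -> 1 < x3 -> 1 < x4 -> 1 < x5 -> 1 < x6 ->
    x2 <= 2 -> x3 <= 2 -> x4 <= 2 -> x5 <= 2 -> x6 <= 2 ->
    x1 = 1 + delta ->
    phi x1 x2 x3 x4 x5 x6 >= bnd delta /\ bnd delta >= cos eps /\
    cos (alpha_of (phi x1 x2 x3 x4 x5 x6)) >= cos eps.
Proof.
  intros _ Hd Hb x1 x2 x3 x4 x5 x6 H1 H2 H3 H4 H5 H6 H2' H3' H4' H5' H6' Hx1.
  assert (Hphi : 2 * (2 - x1) / (1 + x1) <= phi x1 x2 x3 x4 x5 x6)
    by (apply phi_lower_bound; lra).
  replace (2 * (2 - x1) / (1 + x1)) with (2 * (1 - delta) / (2 + delta))
    in Hphi by (subst x1; f_equal; ring).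
  assert (Hbnd := bnd_le delta ltac:(lra)).
  split; [lra|]. split; [exact Hb|].
  apply Rle_ge, cos_alpha_of_ge; [apply COS_bound | lra].
Qed.
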